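(* There exist an instance $(C,M)$ of 2-SBCM and a permutation $\pi^0$ of $C$ such that no solution with start permutation $\pi^0$ that has the minimum number of block crossings among all solutions with start permutation $\pi^0$ uses at most one block crossing before the first meeting and at most one block crossing between each pair of consecutive meetings (i.e., every such minimum solution has some $|B_i|\ge 2$).
   Context: A storyline instance is a pair $(C,M)$ where $C=\{1,\dots,k\}$ is a set of characters and $M=[m_1,\dots,m_n]$ is a sequence of meetings with $m_i\subseteq C$; in 2-SBCM every meeting has exactly two characters. A permutation of $C$ lists each character exactly once. For $1\le a\le b<c\le k$, the block crossing $(a,b,c)$ maps $\langle \pi_1,\dots,\pi_k\rangle$ to $\langle \pi_1,\dots,\pi_{a-1},\pi_{b+1},\dots,\pi_c,\pi_a,\dots,\pi_b,\pi_{c+1},\dots,\pi_k\rangle$. A meeting fits (is supported by) a permutation if its characters occupy consecutive positions. A solution is a start permutation $\pi^0$ and sequences $B_1,\dots,B_n$ of block crossings (possibly empty) such that, with $\pi^i$ obtained by applying $B_i$ in order to $\pi^{i-1}$, $\pi^i$ supports $m_i$ for all $i$; its cost is the total number of block crossings. *)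

From mathcomp Require Import all_boot.
Set Implicit Arguments. Unset Strict Implicit. Unset Printing Implicit Defensive.

(* Characters are 'I_k (i.e. {0,...,k-1}, a relabelling of {1,...,k}).
   Positions in block crossings are 1-indexed, as in the paper. *)

Definition is_char_perm (k : nat) (p : seq 'I_k) : Prop := perm_eq p (enum 'I_k).

Definition block_crossing := (nat * nat * nat)%type.

Definition bc_valid (k : nat) (t : block_crossing) : bool :=
  let: (a, b, c) := t in [&& 1 <= a, a <= b, b < c & c <= k].

(* (a,b,c) maps <p_1..p_k> to <p_1..p_{a-1}, p_{b+1}..p_c, p_a..p_b, p_{c+1}..p_k> *)
Definition apply_bc (T : Type) (p : seq T) (t : block_crossing) : seq T :=
  let: (a, b, c) := t in
  take a.-1 p ++ drop b (take c p) ++ drop a.-1 (take b p) ++ drop c p.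

Definition apply_bcs (T : Type) (p : seq T) (B : seq block_crossing) : seq T :=
  foldl (@apply_bc T) p B.

Definition supports (k : nat) (p : seq 'I_k) (m : {set 'I_k}) : Prop :=
  exists s, s + #|m| <= size p /\ [set x in drop s (take (s + #|m|) p)] = m.

Definition perm_sequence (k : nat) (p0 : seq 'I_k) (Bs : seq (seq block_crossing))
  : seq (seq 'I_k) := scanl (@apply_bcs 'I_k) p0 Bs.

Definition is_solution (k : nat) (M : seq {set 'I_k}) (p0 : seq 'I_k)
    (Bs : seq (seq block_crossing)) : Prop :=
  [/\ is_char_perm p0,
      size Bs = size M,
      all (all (@bc_valid k)) Bs &
      forall i, i < size M -> supports (nth p0 (perm_sequence p0 Bs) i) (nth set0 M i)].

Definition cost (Bs : seq (seq block_crossing)) : nat := sumn (map size Bs).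

Definition is_min_solution_from (k : nat) (M : seq {set 'I_k}) (p0 : seq 'I_k)
    (Bs : seq (seq block_crossing)) : Prop :=
  is_solution M p0 Bs /\
  forall Bs', is_solution M p0 Bs' -> cost Bs <= cost Bs'.

Definition is_2SBCM (k : nat) (M : seq {set 'I_k}) : Prop :=
  all (fun m : {set 'I_k} => #|m| == 2) M.

From mathcomp Require Import all_boot zify.
Set Implicit Arguments. Unset Strict Implicit. Unset Printing Implicit Defensive.

(* Take characters 0..6, start order 0 1 2 3 4 5 6 and meetings {1,6}, {0,1},
   {6,3}, {3,2}, {2,5}.  The block crossings (4,5,7) and (3,4,6) turn the start
   order into 0 1 6 3 2 5 4, in which all five meetings are adjacent pairs, so a
   minimum solution costs at most 2.  Solutions with at most one block crossing
   per gap and at most two in total are few enough to be enumerated, and none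
   of them supports all the meetings. *)

Lemma infix_windowP (T : eqType) (w p : seq T) :
  reflect (exists2 s, s + size w <= size p & drop s (take (s + size w) p) = w) (infix w p).
Proof.
apply: (iffP (@infixP T w p)) => [[s [s' ->]] | [s _ <-]].
  exists (size s); first by rewrite !size_cat; lia.
  by rewrite catA take_size_cat ?size_cat // drop_size_cat.
exists (take s p), (drop (s + size w) p).
by rewrite addnC -take_drop -drop_drop !cat_take_drop.
Qed.

Definition adjacent (T : eqType) (p : seq T) (u v : T) : bool :=
  infix [:: u; v] p || infix [:: v; u] p.

Lemma infix_map (T U : eqType) (f : T -> U) : injective f ->
  forall w p, infix (map f w) (map f p) = infix w p.
Proof.
move=> injf w p; apply/infix_windowP/infix_windowP => -[s]; rewrite !size_map => hs E;
  exists s => //; last by rewrite -map_take -map_drop E.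
by apply: (inj_map injf); rewrite map_drop map_take.
Qed.

Lemma adjacent_map (T U : eqType) (f : T -> U) : injective f ->
  forall p u v, adjacent (map f p) (f u) (f v) = adjacent p u v.
Proof. by move=> injf p u v; rewrite /adjacent -!(infix_map injf). Qed.

Lemma supports_pairP k (p : seq 'I_k) (a b : 'I_k) :
  a != b -> reflect (supports p [set a; b]) (adjacent p a b).
Proof.
move=> ab; rewrite /supports cards2 ab /=.
apply: (iffP orP) => [[] /infix_windowP [s hs E] | [s [hs E]]].
- by exists s; split => //; rewrite E; apply/setP => x; rewrite !inE.
- by exists s; split => //; rewrite E; apply/setP => x; rewrite !inE orbC.
have : size (drop s (take (s + 2) p)) = 2 by rewrite size_drop size_take; case: ifP; lia.
case def_w: (drop s (take (s + 2) p)) E => [|x [|y []]] // /setP E _.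
have := E a; have := E b; rewrite !inE !eqxx orbT.
case/orP=> /eqP eb /orP[] /eqP ea; subst a b; rewrite ?eqxx // in ab;
  [right | left]; apply/infix_windowP; by exists s; rewrite ?def_w.
Qed.

Section Relabel.

Variables (T U : Type) (f : T -> U).

Lemma map_apply_bc p t : map f (apply_bc p t) = apply_bc (map f p) t.
Proof. by case: t => [[a b] c]; rewrite /apply_bc !map_cat !map_drop !map_take. Qed.

Lemma map_apply_bcs p B : map f (apply_bcs p B) = apply_bcs (map f p) B.
Proof. by elim: B p => [|t B IH] p //=; rewrite IH map_apply_bc. Qed.

Lemma map_scanl_apply_bcs p Bs :
  map (map f) (scanl (@apply_bcs T) p Bs) = scanl (@apply_bcs U) (map f p) Bs.
Proof. by elim: Bs p => [|B Bs IH] p //=; rewrite IH map_apply_bcs. Qed.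

End Relabel.

Lemma val_perm_sequence k (p0 : seq 'I_k) Bs i : i < size Bs ->
  map val (nth p0 (perm_sequence p0 Bs) i) =
  nth (map val p0) (scanl (@apply_bcs nat) (map val p0) Bs) i.
Proof.
by move=> hi; rewrite -map_scanl_apply_bcs (nth_map p0) ?size_scanl.
Qed.

Definition valid_bcs (k : nat) : seq block_crossing :=
  let r := iota 0 k.+1 in
  [seq t <- [seq (ab, c) | ab <- [seq (a, b) | a <- r, b <- r], c <- r] | bc_valid k t].

Lemma mem_valid_bcs k t : (t \in valid_bcs k) = bc_valid k t.
Proof.
rewrite mem_filter andb_idr //; case: t => [[a b] c] /and4P [? ? ? ?].
by rewrite allpairs_f // ?allpairs_f // mem_iota; lia.
Qed.

Definition one_per_gap (Bs : seq (seq block_crossing)) : bool := all (fun B => size B <= 1) Bs.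

Section Search.

Variables (T : eqType) (k budget : nat).

(* A search state is a permutation together with the number of block crossings
   spent to reach it; a meeting is given by its two characters. *)
Definition search_step (S : seq (seq T * nat)) (m : T * T) : seq (seq T * nat) :=
  [seq x <- flatten [seq x :: [seq (apply_bc x.1 t, x.2.+1) | t <- valid_bcs k] | x <- S]
     | (x.2 <= budget) && adjacent x.1 m.1 m.2].

Definition search (M : seq (T * T)) (p0 : seq T) : seq (seq T * nat) :=
  foldl search_step [:: (p0, 0)] M.

Lemma mem_search_step S m p c B :
  (p, c) \in S -> size B <= 1 -> all (bc_valid k) B -> c + size B <= budget ->
  adjacent (apply_bcs p B) m.1 m.2 -> (apply_bcs p B, c + size B) \in search_step S m.
Proof.
move=> pS hB vB hc hm; rewrite mem_filter hc hm.
apply/flatten_mapP; exists (p, c) => //.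
case: B hB vB {hc hm} => [|t [|]] //= _; first by rewrite addn0 mem_head.
by rewrite andbT addn1 -mem_valid_bcs inE => vt; apply/orP; right; apply: map_f.
Qed.

Lemma foldl_search_step_nonempty M m0 S p c Bs :
  (p, c) \in S -> size Bs = size M -> one_per_gap Bs -> all (all (bc_valid k)) Bs ->
  c + cost Bs <= budget ->
  (forall i, i < size M ->
     adjacent (nth p (scanl (@apply_bcs T) p Bs) i) (nth m0 M i).1 (nth m0 M i).2) ->
  foldl search_step S M != [::].
Proof.
elim: M S p c Bs => [|m M IH] S p c [|B Bs] //=; first by case: S.
move=> pS [hsz] /andP [hB hBs] /andP [vB vBs]; rewrite /cost /= addnA => hc hadj.
apply: (IH _ (apply_bcs p B) (c + size B) Bs) => // [|i hi].
  by apply: mem_search_step => //; [lia | exact: (hadj 0)].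
by rewrite (set_nth_default p) ?size_scanl ?hsz //; exact: (hadj i.+1).
Qed.

Lemma search_nonempty M m0 p0 Bs :
  size Bs = size M -> one_per_gap Bs -> all (all (bc_valid k)) Bs -> cost Bs <= budget ->
  (forall i, i < size M ->
     adjacent (nth p0 (scanl (@apply_bcs T) p0 Bs) i) (nth m0 M i).1 (nth m0 M i).2) ->
  search M p0 != [::].
Proof. exact: (foldl_search_step_nonempty (c := 0) (mem_head _ _)). Qed.

End Search.

(* The search runs on the labels [val x : nat]: [vm_compute] cannot evaluate
   [enum 'I_k] or [inord], which go through [insub] and the opaque [idP]. *)
Definition meeting_pairs : seq (nat * nat) := [:: (1, 6); (0, 1); (6, 3); (3, 2); (2, 5)].

Definition meetings : seq {set 'I_7} :=
  [seq [set inord m.1; inord m.2] | m <- meeting_pairs].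

Lemma meeting_pair_inord i : i < size meeting_pairs ->
  let m := nth (0, 0) meeting_pairs i in
  [/\ (inord m.1 : 'I_7) != inord m.2,
      val (inord m.1 : 'I_7) = m.1 & val (inord m.2 : 'I_7) = m.2].
Proof.
move=> hi m; have /and3P [h1 h2 h12] : [&& m.1 < 7, m.2 < 7 & m.1 != m.2].
  by move: i hi @m; do 5! case=> //.
rewrite /= !inordK //; split => //.
by apply: contra h12 => /eqP/(congr1 val); rewrite /= !inordK // => ->.
Qed.

Lemma card_meetings i : i < size meeting_pairs -> #|nth set0 meetings i| = 2.
Proof.
by move=> hi; have [ab _ _] := meeting_pair_inord hi; rewrite (nth_map (0, 0)) // cards2 ab.
Qed.

Lemma supports_meetingP q i : i < size meeting_pairs ->
  reflect (supports q (nth set0 meetings i))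
          (adjacent (map val q) (nth (0, 0) meeting_pairs i).1 (nth (0, 0) meeting_pairs i).2).
Proof.
move=> hi; have [ab e1 e2] := meeting_pair_inord hi.
by have := supports_pairP q ab; rewrite -(adjacent_map val_inj) e1 e2 (nth_map (0, 0)).
Qed.

Definition two_crossing_solution : seq (seq block_crossing) :=
  [:: [:: (4, 5, 7); (3, 4, 6)]; [::]; [::]; [::]; [::]].

Lemma two_crossing_solutionP : is_solution meetings (enum 'I_7) two_crossing_solution.
Proof.
split => //; first exact: perm_refl.
move=> i hi; apply/supports_meetingP => //.
rewrite val_perm_sequence // val_enum_ord.
by move: i hi; do 5! case=> //.
Qed.

Lemma search_meetings_empty : search 7 2 meeting_pairs (iota 0 7) = [::].
Proof. by vm_compute. Qed.

Theorem proposition1 :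
  exists (k : nat) (M : seq {set 'I_k}) (p0 : seq 'I_k),
    is_2SBCM M /\ is_char_perm p0 /\
    forall Bs : seq (seq block_crossing),
      is_min_solution_from M p0 Bs ->
      exists i, i < size Bs /\ 2 <= size (nth [::] Bs i).
Proof.
exists 7, meetings, (enum 'I_7); split.
  by apply/(all_nthP set0) => i; rewrite size_map => /card_meetings ->.
split => [|Bs [solBs minBs]]; first exact: perm_refl.
have [smallBs | /allPn [B BinBs]] := boolP (one_per_gap Bs); last first.
  by rewrite -ltnNge => hB; exists (index B Bs); rewrite index_mem nth_index.
have costBs : cost Bs <= 2 := minBs _ two_crossing_solutionP.
have [_ sizeBs validBs supBs] := solBs; rewrite size_map in sizeBs supBs.
have adjBs i : i < size meeting_pairs ->
    adjacent (nth (iota 0 7) (scanl (@apply_bcs nat) (iota 0 7) Bs) i)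
             (nth (0, 0) meeting_pairs i).1 (nth (0, 0) meeting_pairs i).2.
  move=> hi; rewrite -val_enum_ord -val_perm_sequence ?sizeBs //.
  by apply/supports_meetingP => //; exact: supBs.
have := search_nonempty sizeBs smallBs validBs costBs adjBs.
by rewrite search_meetings_empty.
Qed.
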